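(* Let $i\geqslant 1$ and $d\geqslant 4$, $d\neq 6$, be integers. For $q=2,\dots,[d/2]$ set $$E_q=\binom{d+i+1}{i+1}-\binom{d-2q+i+1}{i+1}-\binom{q+i+1}{i+1}.$$ Then $\min\{E_q\mid q=2,\dots,[d/2]\}$ is attained at $q=2$.
   Context: $[x]$ denotes the integer part of $x$. *)

From mathcomp Require Import all_boot all_algebra.
Local Open Scope ring_scope.

(* E_q = C(d+i+1,i+1) - C(d-2q+i+1,i+1) - C(q+i+1,i+1), computed in int
   (for 2 <= q <= d/2 we have d - 2q >= 0, so the nat subtraction d - 2*q is exact). *)
Definition Eq (d i q : nat) : int :=
  ('C(d + i + 1, i + 1))%:Z - ('C(d - 2 * q + i + 1, i + 1))%:Z
  - ('C(q + i + 1, i + 1))%:Z.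

From mathcomp Require Import all_boot all_order all_algebra zify lra.
Import Order.TTheory GRing.Theory Num.Theory.
Local Open Scope ring_scope.

(* Write E_q = F d - h q with F n = C(n+i+1, i+1) and h q = F (d - 2q) + F q.
   The increments C(n+i+1, i) of F are nondecreasing in n, so F is discretely
   convex, hence so is h, and a convex function on an integer interval is
   maximal at an endpoint.  At the right endpoint [d/2], monotonicity of F
   gives h [d/2] <= h 2 because d - 2[d/2] <= 1 and, for d >= 7,
   [d/2] <= d - 4; for d = 4, 5 the range of q is {2}.  The case d = 6 is
   where [d/2] > d - 4. *)

Definition convex_on {R : numDomainType} (a b : nat) (h : nat -> R) :=
  forall y, (a <= y)%N -> (y.+2 <= b)%N -> h y.+1 - h y <= h y.+2 - h y.+1.

Lemma convex_onW {R : numDomainType} (a a' b b' : nat) (h : nat -> R) :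
  (a <= a')%N -> (b' <= b)%N -> convex_on a b h -> convex_on a' b' h.
Proof. by move=> ha hb hconv y hy1 hy2; apply: hconv; lia. Qed.

Lemma convex_onD {R : numDomainType} (a b : nat) (f g : nat -> R) :
  convex_on a b f -> convex_on a b g -> convex_on a b (fun y => f y + g y).
Proof.
move=> fconv gconv y hy1 hy2.
by rewrite !opprD !(addrACA (f _) _ (- f _)) lerD ?fconv ?gconv.
Qed.

Section ConvexOnMax.
Context {R : realDomainType} {a b : nat} {h : nat -> R}.
Hypothesis hconv : convex_on a b h.

Let delta y := h y.+1 - h y.

Lemma convex_on_delta_mono y z :
  (a <= y)%N -> (y <= z)%N -> (z < b)%N -> delta y <= delta z.
Proof.
move=> ay; elim: z => [|z IH]; first by rewrite leqn0 => /eqP->.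
rewrite leq_eqVlt ltnS => /predU1P[-> //|yz] zb.
apply: le_trans (IH yz (ltnW zb)) _.
by apply: hconv => //; apply: leq_trans yz.
Qed.

Lemma convex_on_le_right x : (a <= x < b)%N -> 0 <= delta x -> h x <= h b.
Proof.
move=> /andP[ax xb] delta_x_ge0.
rewrite -subr_ge0 -(telescope_sumr _ (ltnW xb)) big_nat_cond.
apply: sumr_ge0 => k /andP[/andP[xk kb] _].
by apply: le_trans delta_x_ge0 _; apply: convex_on_delta_mono; lia.
Qed.

Lemma convex_on_le_left x : (a < x <= b)%N -> delta x.-1 <= 0 -> h x <= h a.
Proof.
move=> /andP[ax xb] delta_x_le0.
rewrite -subr_le0 -(telescope_sumr _ (ltnW ax)) big_nat_cond.
apply: sumr_le0 => k /andP[/andP[ak kx] _].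
by apply: le_trans _ delta_x_le0; apply: convex_on_delta_mono; lia.
Qed.

Lemma convex_on_le_max x : (a <= x <= b)%N -> h x <= Num.max (h a) (h b).
Proof.
move=> /andP[ax xb]; rewrite le_max.
have [<-|ax'] := eqVneq a x; first by rewrite lexx.
have [->|xb'] := eqVneq x b; first by rewrite lexx orbT.
have delta_step : delta x.-1 <= delta x by apply: convex_on_delta_mono; lia.
have [delta_x_ge0|delta_x_lt0] := lerP 0 (delta x).
  by rewrite convex_on_le_right ?orbT //; apply/andP; lia.
rewrite convex_on_le_left //; first by apply/andP; lia.
exact/ltW/(le_lt_trans delta_step).
Qed.

End ConvexOnMax.

Lemma convex_on_binomial {R : numDomainType} (k a b : nat) :
  convex_on a b (fun n => ('C(n + k.+1, k.+1))%:R : R).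
Proof.
have delta_binomial n : ('C(n.+1 + k.+1, k.+1))%:R - ('C(n + k.+1, k.+1))%:R
    = ('C(n + k.+1, k))%:R :> R.
  by rewrite addSn binS natrD addrAC subrr add0r.
move=> y _ _; rewrite !delta_binomial ler_nat.
by apply: leq_bin2l; rewrite leq_add2r.
Qed.

Lemma convex_on_sub_double {R : realDomainType} (c : nat) (f : nat -> R) :
  convex_on 0 c f -> convex_on 0 c./2 (fun y => f (c - 2 * y)%N).
Proof.
move=> fconv y _ hy.
set n := (c - 2 * y.+2)%N.
have -> : (c - 2 * y = n.+4)%N by rewrite /n; lia.
have -> : (c - 2 * y.+1 = n.+2)%N by rewrite /n; lia.
have hn : (n.+4 <= c)%N by rewrite /n; lia.
have := fconv n isT (ltnW (ltnW hn)).
have := fconv n.+1 isT (ltnW hn).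
have := fconv n.+2 isT hn.
lra.
Qed.

Theorem lemma1p1 (i d : nat) (hi : (1 <= i)%N) (hd : (4 <= d)%N) (hd6 : d <> 6%N) :
  forall q : nat, (2 <= q)%N -> (q <= d./2)%N -> Eq d i 2 <= Eq d i q.
Proof.
move=> q hq2 hqK.
pose F n : int := ('C(n + i.+1, i.+1))%:R.
pose h y : int := F (d - 2 * y)%N + F y.
have EqE y : Eq d i y = F d - h y.
  by rewrite /Eq /h /F !natz !addn1 !addnS opprD addrA.
rewrite !EqE lerB //.
have [hd5|hd7] := leqP d 5; first by have -> : q = 2%N by lia.
have F_mono : {homo F : m n / (m <= n)%N >-> m <= n}.
  by move=> m n mn; rewrite ler_nat leq_bin2l // leq_add2r.
have h_convex : convex_on 2 d./2 h.
  apply: (convex_onW 0 2 d./2 d./2) => //; apply: convex_onD.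
    exact/convex_on_sub_double/convex_on_binomial.
  by apply: (convex_onW 0 0 d) => //; [lia | exact: convex_on_binomial].
have h_right_le : h d./2 <= h 2%N by rewrite /h addrC lerD // F_mono //; lia.
have hq : (2 <= q <= d./2)%N by apply/andP.
apply: le_trans (convex_on_le_max h_convex q hq) _.
by rewrite ge_max lexx h_right_le.
Qed.
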